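(* Let $X\times G\xrightarrow{\alpha}X$ be a continuous right action of a locally compact Hausdorff group $G$ on a Hausdorff space $X$, and let $H\le G$ be a closed cocompact subgroup (i.e. $G/H$ is compact), with restricted action $\alpha^H$. Then for any closed $F\subseteq X$, $\alpha$ is $F$-proper if and only if $\alpha^H$ is $F$-proper; likewise $\alpha$ is Bourbaki-proper (respectively Palais-proper) if and only if $\alpha^H$ is.
   Context: For $A,B\subseteq X$ set $\langle A:B\rangle_\alpha:=\{g\in G: Bg\cap A\neq\emptyset\}$, and write $A\perp B$ if this set is relatively compact in $G$. The action is Bourbaki-proper if for all $x,x'\in X$ there are neighborhoods $V_x\ni x$, $V_{x'}\ni x'$ with $V_{x'}\perp V_x$. It is Palais-proper if for every $x\in X$ there is a neighborhood $V_x$ such that for every $x'\in X$ there is a neighborhood $V_{x'}$ with $V_x\perp V_{x'}$. For a closed $F\subseteq X$, the action is $F$-proper if for every $x\in X$ there are neighborhoods $V_x\ni x$ and $V_F\supseteq F$ (an open set containing $F$) with $V_F\perp V_x$. *)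

From HB Require Import structures.
From mathcomp Require Import all_boot all_order all_algebra.
From mathcomp Require Import all_classical topology.
Set Implicit Arguments. Unset Strict Implicit. Unset Printing Implicit Defensive.
Local Open Scope classical_set_scope.

Definition topological_group (G : topologicalType)
  (mul : G -> G -> G) (inv : G -> G) (e : G) : Prop :=
  [/\ (forall a b c, mul a (mul b c) = mul (mul a b) c),
      (forall a, mul e a = a /\ mul a e = a),
      (forall a, mul (inv a) a = e /\ mul a (inv a) = e),
      continuous (fun p : G * G => mul p.1 p.2) &
      continuous inv].

Definition is_subgroup (G : Type) (mul : G -> G -> G) (inv : G -> G) (e : G)
  (H : set G) : Prop :=
  [/\ H e, (forall a b, H a -> H b -> H (mul a b)) & (forall a, H a -> H (inv a))].

(* G/H (left cosets gH, quotient topology) is compact.  Open sets of G/H are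
   exactly the images of open right-H-saturated subsets of G, so compactness of
   the quotient space unfolds to: every cover of G by open H-saturated sets
   has a finite subcover. *)
Definition cocompact (G : topologicalType) (mul : G -> G -> G) (H : set G) : Prop :=
  forall (I : Type) (U : I -> set G),
    (forall i, open (U i)) ->
    (forall i g h, U i g -> H h -> U i (mul g h)) ->
    (forall g, exists i, U i g) ->
    exists D : set I, finite_set D /\ forall g, exists2 i, D i & U i g.

Definition continuous_right_action (X G : topologicalType)
  (mul : G -> G -> G) (e : G) (act : X -> G -> X) : Prop :=
  [/\ (forall x, act x e = x),
      (forall x g h, act (act x g) h = act x (mul g h)) &
      continuous (fun p : X * G => act p.1 p.2)].

Section Proper.
Variables (X G : topologicalType) (act : X -> G -> X) (S : set G).
(* S is the acting (sub)group: the action restricted to S.  Relative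
   compactness is taken in the space S with its subspace topology. *)

Definition transporter (A B : set X) : set G :=
  [set g | S g /\ exists2 b, B b & A (act b g)].

Definition perp (A B : set X) : Prop :=
  @precompact (subspace S) (transporter A B).

Definition bourbaki_proper : Prop :=
  forall x x' : X, exists Vx Vx',
    [/\ nbhs x Vx, nbhs x' Vx' & perp Vx' Vx].

Definition palais_proper : Prop :=
  forall x : X, exists Vx, nbhs x Vx /\
    forall x' : X, exists Vx', nbhs x' Vx' /\ perp Vx Vx'.

Definition F_proper (F : set X) : Prop :=
  forall x : X, exists Vx VF,
    [/\ nbhs x Vx, open VF, F `<=` VF & perp VF Vx].
End Proper.

(* Since G/H is compact and G is locally compact, G = K H for a compact K.
   Passing from G to H only shrinks transporters.  Conversely, fix x and let
   V_y, W_y witness H-properness at y.  By the tube lemma there are k_1, ..., k_n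
   in K and a neighbourhood A of x with A K covered by the V_(x k_i), and then
     ⟨∩_i W_(x k_i) : A⟩_G ⊆ K · ∪_i ⟨W_(x k_i) : V_(x k_i)⟩_H,
   which is relatively compact.  For Palais-properness the two arguments are
   exchanged using ⟨A : B⟩ = ⟨B : A⟩⁻¹. *)
From HB Require Import structures.
From mathcomp Require Import all_boot all_order all_algebra.
From mathcomp Require Import all_classical topology.
From mathcomp Require Import finmap.
Set Implicit Arguments. Unset Strict Implicit. Unset Printing Implicit Defensive.
Local Open Scope classical_set_scope.

Section FiniteFamilies.
Variables (T : topologicalType) (I : choiceType) (D : {fset I}).
Implicit Types f : I -> set T.

Lemma open_bigcap_fset f :
  (forall i, i \in D -> open (f i)) -> open (\bigcap_(i in [set` D]) f i).
Proof.
move=> fo; rewrite openE => t ft; apply: filter_bigI => i iD.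
by apply: open_nbhs_nbhs; split; [exact: fo | exact: ft].
Qed.

Lemma compact_bigcup_fset f :
  (forall i, i \in D -> compact (f i)) -> compact (\bigcup_(i in [set` D]) f i).
Proof. by move=> fc; rewrite bigcup_fset big_seq; exact: bigsetU_compact. Qed.

Lemma precompact_bigcup_fset f : hausdorff_space T ->
  (forall i, i \in D -> precompact (f i)) ->
  precompact (\bigcup_(i in [set` D]) f i).
Proof.
move=> hT fpc; apply: (@precompact_subset _ _ (\bigcup_(i in [set` D]) closure (f i))).
  by move=> t [i iD fit]; exists i => //; exact: subset_closure.
apply: compact_precompact => //; apply: compact_bigcup_fset => i iD.
by rewrite -precompactE; exact: fpc.
Qed.

End FiniteFamilies.

Lemma compact_cover_compact (T : topologicalType) (A : set T) :
  compact A -> cover_compact A.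
Proof.
have [[a _] cA|A0 _] := pselect (A !=set0); last first.
  by move=> I D f _ _; exists fset0 => // t At; case: A0; exists t.
(* [compact_cover] is only stated for pointed spaces. *)
pose Tp : ptopologicalType := HB.pack T (isPointed.Build T a).
suff : @cover_compact Tp A by [].
by rewrite -(@compact_cover Tp).
Qed.

Lemma tube_fset (X Y Z : topologicalType) (f : X -> Y -> Z) (x : X)
    (K : set Y) (Q : Y -> set Z) :
  continuous (fun p : X * Y => f p.1 p.2) -> compact K ->
  (forall y, K y -> nbhs (f x y) (Q y)) ->
  exists (D : {fset Y}) (A : set X), nbhs x A /\
    forall b y, A b -> K y -> exists2 k, k \in D & Q k (f b y).
Proof.
move=> fc cK KQ.
have /boolp.choice [AB ABP] : forall y, exists AB : set X * set Y, K y ->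
    [/\ nbhs x AB.1, nbhs y AB.2 & forall b z, AB.1 b -> AB.2 z -> Q y (f b z)].
  move=> y; have [Ky|nKy] := pselect (K y); last by exists (setT, setT).
  have [[A B] /= [nA nB] ABQ] := fc (x, y) _ (KQ y Ky).
  by exists (A, B) => _; split => // b z Ab Bz; exact: (ABQ (b, z)).
have [||D DK KD] := compact_cover_compact cK (D := K) (f := fun y => ((AB y).2)°).
- by move=> y _; exact: open_interior.
- by move=> y Ky; exists y => //; have [_ + _] := ABP y Ky.
exists D, (\bigcap_(k in [set` D]) (AB k).1); split.
  by apply: filter_bigI => k /DK/set_mem Kk; have [] := ABP k Kk.
move=> b y Ab Ky; have [k kD ky] := KD y Ky; exists k => //.
have [_ _] := ABP k (set_mem (DK k kD)); apply; first exact: Ab.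
exact: interior_subset.
Qed.

Section Transporter.
Context {X G : topologicalType} {act : X -> G -> X}.

Lemma perpE (S : set G) (A B : set X) :
  closed S -> perp act S A B <-> precompact (transporter act S A B).
Proof.
move=> cS; have TS : transporter act S A B `<=` S by move=> g [].
have clTS : closure (transporter act S A B) `<=` S.
  by rewrite [X in _ `<=` X](closure_id S).1 //; exact: closureS.
rewrite /perp !precompactE closure_subspaceW //.
by rewrite -[in X in _ <-> X](setIidl clTS); exact: compact_subspaceIP.
Qed.

Lemma perp_restrict (H : set G) (A B : set X) :
  closed H -> perp act [set: G] A B -> perp act H A B.
Proof.
by move=> cH; rewrite !perpE //; apply: precompact_subset => g [].
Qed.

Lemma F_proper_restrict (H : set G) (F : set X) :
  closed H -> F_proper act [set: G] F -> F_proper act H F.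
Proof.
move=> cH GF x; have [V [W [nV oW FW pWV]]] := GF x.
by exists V, W; split => //; exact: perp_restrict.
Qed.

Lemma bourbaki_proper_restrict (H : set G) :
  closed H -> bourbaki_proper act [set: G] -> bourbaki_proper act H.
Proof.
move=> cH GB x x'; have [V [V' [nV nV' pV'V]]] := GB x x'.
by exists V, V'; split => //; exact: perp_restrict.
Qed.

Lemma palais_proper_restrict (H : set G) :
  closed H -> palais_proper act [set: G] -> palais_proper act H.
Proof.
move=> cH GP x; have [V [nV VP]] := GP x; exists V; split => // x'.
by have [V' [nV' pVV']] := VP x'; exists V'; split => //; exact: perp_restrict.
Qed.

End Transporter.

Section TopologicalGroup.
Variables (G : topologicalType) (mul : G -> G -> G) (inv : G -> G) (e : G).
Hypothesis tgG : topological_group mul inv e.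

Let mulgA a b c : mul a (mul b c) = mul (mul a b) c.
Proof. by case: tgG. Qed.
Let mul1g a : mul e a = a.
Proof. by case: tgG => _ /(_ a) []. Qed.
Let mulg1 a : mul a e = a.
Proof. by case: tgG => _ /(_ a) []. Qed.
Let mulVg a : mul (inv a) a = e.
Proof. by case: tgG => _ _ /(_ a) []. Qed.
Let mulgV a : mul a (inv a) = e.
Proof. by case: tgG => _ _ /(_ a) []. Qed.

Lemma invgK : involutive inv.
Proof. by move=> a; rewrite -[RHS]mul1g -(mulVg (inv a)) -mulgA mulVg mulg1. Qed.

Lemma continuous_mulr (c : G) : continuous (mul^~ c).
Proof.
case: tgG => _ _ _ mulC _ g W nW; have [[A B] /= [nA nB] ABW] := mulC (g, c) _ nW.
by apply: filterS nA => a Aa; apply: (ABW (a, c)); split => //; exact: nbhs_singleton.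
Qed.

Lemma open_mul_set (U H : set G) : open U -> open [set mul u h | u in U & h in H].
Proof.
move=> oU.
have -> : [set mul u h | u in U & h in H] =
    \bigcup_(h in H) (mul^~ (inv h)) @^-1` U.
  apply/seteqP; split => [_ [u Uu [h Hh <-]]|g [h Hh /= Ugh]].
    by exists h => //=; rewrite -mulgA mulgV mulg1.
  by exists (mul g (inv h)) => //; exists h => //; rewrite -mulgA mulVg mulg1.
apply: bigcup_open => h _; apply: open_comp => // g _; exact: continuous_mulr.
Qed.

Lemma cocompact_decomposition (H : set G) :
  locally_compact [set: G] -> is_subgroup mul inv e H -> cocompact mul H ->
  exists2 K : set G, compact K & [set mul k h | k in K & h in H] = [set: G].
Proof.
move=> lcG [He HM _] ccH.
have /boolp.choice [N NP] : forall x : G, exists N : set G, nbhs x N /\ compact N.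
  by move=> x; have [N] := lcG x I; rewrite withinET => nN [cN _]; exists N.
have [|||D [fD DG]] := ccH G (fun x => [set mul u h | u in (N x)° & h in H]).
- by move=> x; apply: open_mul_set; exact: open_interior.
- move=> x _ h' [u Nu [h Hh <-]] Hh'.
  by exists u => //; exists (mul h h'); [exact: HM | rewrite mulgA].
- by move=> g; exists g, g; [exact: (NP g).1 | exists e; [|exact: mulg1]].
have [D' DE] := finite_fsetP.1 fD; rewrite DE in DG.
exists (\bigcup_(x in [set` D']) N x).
  by apply: compact_bigcup_fset => x _; exact: (NP x).2.
apply/seteqP; split => // g _; have [x Dx [u Nu [h Hh <-]]] := DG g.
by exists u; [exists x => //; exact: interior_subset | exists h].
Qed.

Hypothesis hG : hausdorff_space G.

Lemma precompact_mul (A B : set G) : precompact A -> precompact B ->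
  precompact [set mul a b | a in A & b in B].
Proof.
move=> pA pB.
apply: (@precompact_subset _ _ [set mul a b | a in closure A & b in closure B]).
  by move=> _ [a Aa [b Bb <-]]; exists a; [|exists b]; rewrite //; exact: subset_closure.
apply: compact_precompact => //; rewrite image2E; apply: continuous_compact.
  have -> : uncurry mul = (fun p : G * G => mul p.1 p.2) by apply/funext => -[].
  by apply: continuous_subspaceT; case: tgG.
by apply: compact_setX; rewrite -precompactE.
Qed.

Lemma precompact_inv (A : set G) : precompact A -> precompact (inv @` A).
Proof.
move=> pA; apply: (@precompact_subset _ _ (inv @` closure A)).
  by apply: image_subset; exact: subset_closure.
apply: compact_precompact => //; apply: continuous_compact.
  by apply: continuous_subspaceT; case: tgG.
by rewrite -precompactE.
Qed.

End TopologicalGroup.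

Section CocompactLift.
Variables (X G : topologicalType) (mul : G -> G -> G) (inv : G -> G) (e : G).
Variables (act : X -> G -> X) (H K : set G).
Hypotheses (tgG : topological_group mul inv e) (hG : hausdorff_space G).
Hypotheses (actG : continuous_right_action mul e act) (subH : is_subgroup mul inv e H).
Hypotheses (cH : closed H) (cK : compact K).
Hypothesis KH : [set mul k h | k in K & h in H] = [set: G].

Lemma transporterV (S : set G) (A B : set X) : (forall g, S g -> S (inv g)) ->
  transporter act S A B `<=` inv @` transporter act S B A.
Proof.
move=> SV g [Sg [b Bb Abg]]; exists (inv g); last exact: (invgK tgG).
split; first exact: SV.
have [act1 actM _] := actG; have [_ _ /(_ g) [_ mulgV] _ _] := tgG.
by exists (act b g) => //; rewrite actM mulgV act1.
Qed.

Lemma precompact_transporterC (S : set G) (A B : set X) :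
  (forall g, S g -> S (inv g)) ->
  precompact (transporter act S B A) -> precompact (transporter act S A B).
Proof.
move=> SV pBA; apply: precompact_subset (transporterV SV) _.
exact: (precompact_inv tgG hG).
Qed.

Lemma transporter_tube (D : {fset G}) (A : set X) (Q T : G -> set X) :
  (forall b g, A b -> K g -> exists2 k, k \in D & Q k (act b g)) ->
  transporter act [set: G] (\bigcap_(k in [set` D]) T k) A `<=`
  [set mul k h | k in K & h in \bigcup_(k in [set` D]) transporter act H (T k) (Q k)].
Proof.
move=> AKQ g [_ [b Ab Tbg]].
have : [set mul k h | k in K & h in H] g by rewrite KH.
case=> k Kk [h Hh kh_g]; exists k => //; exists h => //.
have [k' k'D Qk'] := AKQ b k Ab Kk; exists k' => //; split => //.
by exists (act b k) => //; have [_ -> _] := actG; rewrite kh_g; exact: Tbg.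
Qed.

Lemma precompact_transporter_tube (x : X) (Q : X -> set X) : (forall y, nbhs y (Q y)) ->
  exists (D : {fset G}) (A : set X), nbhs x A /\
    forall T : X -> set X, (forall y, precompact (transporter act H (T y) (Q y))) ->
    precompact (transporter act [set: G] (\bigcap_(k in [set` D]) T (act x k)) A).
Proof.
move=> nQ; have [_ _ actC] := actG.
have [D [A [nA AKQ]]] := tube_fset actC cK (Q := Q \o act x) (fun k _ => nQ _).
exists D, A; split => // T pTQ.
apply: precompact_subset (transporter_tube AKQ) _.
apply: (precompact_mul tgG hG); first exact: compact_precompact.
by apply: precompact_bigcup_fset => // k _; exact: pTQ.
Qed.

Lemma F_proper_lift (F : set X) : F_proper act H F -> F_proper act [set: G] F.
Proof.
move=> /boolp.choice[V /boolp.choice[W VWP]] x.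
have [|D [A [nA tube]]] := precompact_transporter_tube x (Q := V) _.
  by move=> y; have [] := VWP y.
exists A, (\bigcap_(k in [set` D]) W (act x k)); split => //.
- by apply: open_bigcap_fset => k _; have [] := VWP (act x k).
- by move=> z Fz k _; have [_ _ + _] := VWP (act x k); apply.
- by rewrite perpE //; apply: tube => y; have [_ _ _ /(perpE _ _ cH)] := VWP y.
Qed.

Lemma bourbaki_proper_lift :
  bourbaki_proper act H -> bourbaki_proper act [set: G].
Proof.
move=> HB x x'; have /boolp.choice[V /boolp.choice[W VWP]] := HB^~ x'.
have [|D [A [nA tube]]] := precompact_transporter_tube x (Q := V) _.
  by move=> y; have [] := VWP y.
exists A, (\bigcap_(k in [set` D]) W (act x k)); split => //.
- by apply: filter_bigI => k _; have [] := VWP (act x k).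
- by rewrite perpE //; apply: tube => y; have [_ _ /(perpE _ _ cH)] := VWP y.
Qed.

Lemma palais_proper_lift : palais_proper act H -> palais_proper act [set: G].
Proof.
move=> /boolp.choice[V VP] x.
have [|D [A [nA tube]]] := precompact_transporter_tube x (Q := V) _.
  by move=> y; have [] := VP y.
exists A; split => // x'.
have /boolp.choice[W WP] : forall y, exists W,
    nbhs x' W /\ precompact (transporter act H (W) (V y)).
  move=> y; have [W [nW /(perpE _ _ cH) pVW]] := (VP y).2 x'.
  by exists W; split => //; apply: precompact_transporterC pVW; case: subH.
exists (\bigcap_(k in [set` D]) W (act x k)); split.
  by apply: filter_bigI => k _; have [] := WP (act x k).
rewrite perpE //; apply: precompact_transporterC => //; apply: tube => y.
by have [] := WP y.
Qed.

End CocompactLift.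

Theorem lemma2p5 (X G : topologicalType)
  (mul : G -> G -> G) (inv : G -> G) (e : G) (act : X -> G -> X) (H : set G) :
  topological_group mul inv e ->
  locally_compact [set: G] -> hausdorff_space G ->
  hausdorff_space X ->
  continuous_right_action mul e act ->
  is_subgroup mul inv e H -> closed H -> cocompact mul H ->
  (forall F : set X, closed F ->
     (F_proper act [set: G] F <-> F_proper act H F)) /\
  (bourbaki_proper act [set: G] <-> bourbaki_proper act H) /\
  (palais_proper act [set: G] <-> palais_proper act H).
Proof.
move=> tgG lcG hG _ actG subH cH ccH.
have [K cK KH] := cocompact_decomposition tgG lcG subH ccH.
split; [move=> F _; split|split; split].
- exact: F_proper_restrict.
- exact: F_proper_lift tgG hG actG cH cK KH F.
- exact: bourbaki_proper_restrict.
- exact: bourbaki_proper_lift tgG hG actG cH cK KH.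
- exact: palais_proper_restrict.
- exact: palais_proper_lift tgG hG actG subH cH cK KH.
Qed.
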